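(* Under the standing setting and assumptions (A1)–(A3) described in the context, assume $\mathcal A$ is polyhedral and represented by $\varphi_1,\dots,\varphi_m\in\mathcal X'_+$, and for $X\in\mathcal X$ set $I_{\mathcal A}(X)=\{i\in\{1,\dots,m\}: \varphi_i(X)=\sigma_{\mathcal A}(\varphi_i)\}$. Then the following are equivalent: (a) $|\mathcal R(X)|=1$ for every $X\in\mathcal X$; (b) $\ker(\pi)\cap\bigcap_{i\in I_{\mathcal A}(X)}\ker(\varphi_i)=\{0\}$ for every $X\in\partial\mathcal A\cap\partial(\mathcal A+\ker(\pi))$.
   Context: Let $\mathcal X$ be a Hausdorff, first countable, locally convex topological vector space over $\mathbb R$ with dual $\mathcal X'$, partially ordered by a partial order $\geq$ with positive cone $\mathcal X_+=\{X\in\mathcal X: X\geq 0\}$, and $\mathcal X'_+=\{\varphi\in\mathcal X':\varphi(X)\geq0\ \forall X\in\mathcal X_+\}$. Let $\mathcal M\subset\mathcal X$ be a vector subspace with $1<\dim\mathcal M<\infty$, carrying the relative topology, and let $\pi:\mathcal M\to\mathbb R$ be linear with $\ker(\pi)=\{Z\in\mathcal M:\pi(Z)=0\}$. Standing assumptions: (A1) there is $U\in\mathcal M\cap\mathcal X_+$ with $\pi(U)=1$; (A2) $\mathcal A\subsetneq\mathcal X$ is closed, contains $0$, and satisfies $\mathcal A+\mathcal X_+\subset\mathcal A$; (A3) the map $\rho(X)=\inf\{\pi(Z): Z\in\mathcal M,\ X+Z\in\mathcal A\}$ is finitely valued and continuous on $\mathcal X$. The optimal payoff map is $\mathcal R(X)=\{Z\in\mathcal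 M: X+Z\in\mathcal A,\ \pi(Z)=\rho(X)\}$; $|\cdot|$ is cardinality. The support function is $\sigma_{\mathcal A}(\varphi)=\inf_{X\in\mathcal A}\varphi(X)$. $\mathcal A$ is polyhedral and represented by $\varphi_1,\dots,\varphi_m$ if $\mathcal A=\bigcap_{i=1}^m\{X\in\mathcal X:\varphi_i(X)\geq\alpha_i\}$ for some $\alpha_i\in\mathbb R$ (equivalently, $\mathcal A=\bigcap_{i=1}^m\{X:\varphi_i(X)\geq\sigma_{\mathcal A}(\varphi_i)\}$). $\ker(\varphi_i)$ is the kernel of $\varphi_i$. $\partial$ denotes boundary in $\mathcal X$. *)

From HB Require Import structures.
From mathcomp Require Import all_boot all_order all_algebra.
From mathcomp Require Import all_classical all_reals all_analysis.
Set Implicit Arguments. Unset Strict Implicit. Unset Printing Implicit Defensive.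
Import Order.TTheory GRing.Theory Num.Theory numFieldTopology.Exports numFieldNormedType.Exports.
Local Open Scope classical_set_scope.
Local Open Scope ring_scope.

Section Defs.
Context {R : realType} {E : tvsType R}.

Definition first_countable : Prop :=
  forall x : E, exists B : nat -> set E,
    (forall n, nbhs x (B n)) /\ (forall U, nbhs x U -> exists n, B n `<=` U).

Definition topo_boundary (A : set E) : set E := closure A `\` interior A.

Definition vector_partial_order (le : E -> E -> Prop) : Prop :=
  [/\ forall x, le x x,
      forall x y, le x y -> le y x -> x = y,
      forall x y z, le x y -> le y z -> le x z,
      forall x y z, le x y -> le (x + z) (y + z)
    & forall (a : R) x y, 0 <= a -> le x y -> le (a *: x) (a *: y)].

Definition pos_cone (le : E -> E -> Prop) : set E := [set X | le 0 X].

Definition cont_lin_functional (phi : E -> R) : Prop :=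
  [/\ forall x y, phi (x + y) = phi x + phi y,
      forall (a : R) x, phi (a *: x) = a * phi x
    & continuous phi].

Definition pos_dual (le : E -> E -> Prop) (phi : E -> R) : Prop :=
  cont_lin_functional phi /\ (forall X, pos_cone le X -> 0 <= phi X).

Definition lin_indep (d : nat) (b : 'I_d -> E) : Prop :=
  forall c : 'I_d -> R, \sum_(i < d) c i *: b i = 0 -> forall i, c i = 0.
Definition fspan (d : nat) (b : 'I_d -> E) : set E :=
  [set \sum_(i < d) c i *: b i | c in [set: 'I_d -> R]].
Definition finite_dim_subspace_of_dim (M : set E) (d : nat) : Prop :=
  exists b : 'I_d -> E, lin_indep b /\ M = fspan b.

(* pi : M -> R linear (only its values on M matter) *)
Definition linear_on (M : set E) (pi : E -> R) : Prop :=
  (forall x y, M x -> M y -> pi (x + y) = pi x + pi y) /\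
  (forall (a : R) x, M x -> pi (a *: x) = a * pi x).

Definition kerpi (M : set E) (pi : E -> R) : set E := [set Z | M Z /\ pi Z = 0].

Definition rho_set (M : set E) (pi : E -> R) (A : set E) (X : E) : set R :=
  [set pi Z | Z in [set Z | M Z /\ A (X + Z)]].

Definition rho (M : set E) (pi : E -> R) (A : set E) (X : E) : R :=
  inf (rho_set M pi A X).

(* (A3): rho is finitely valued (the inf is over a nonempty set bounded below) *)
Definition rho_finite (M : set E) (pi : E -> R) (A : set E) : Prop :=
  forall X, rho_set M pi A X !=set0 /\ has_lbound (rho_set M pi A X).

Definition optR (M : set E) (pi : E -> R) (A : set E) (X : E) : set E :=
  [set Z | M Z /\ A (X + Z) /\ pi Z = rho M pi A X].

Definition sigmaA (A : set E) (phi : E -> R) : R := inf [set phi X | X in A].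

Definition mink_sum (A B : set E) : set E := [set a + b | a in A & b in B].

Definition polyhedral_rep (A : set E) (m : nat) (phi : 'I_m -> E -> R) : Prop :=
  exists alpha : 'I_m -> R,
    A = \bigcap_(i in [set: 'I_m]) [set X | alpha i <= phi i X].

Definition active_set (A : set E) (m : nat) (phi : 'I_m -> E -> R) (X : E)
  : set 'I_m := [set i | phi i X = sigmaA A (phi i)].

End Defs.

(* The minimum defining rho(X) is attained: it is a linear program (an affine objective under
   finitely many affine constraints on the affine set M), and a feasible program bounded below
   is solved by induction on the number of constraints: either the program without constraint
   i has a minimizer satisfying it, or some point violating it beats every feasible point, and
   then every feasible point can be pushed onto the face g i = a i without increasing the cost.
   With attainment, rho(X + Z) = rho(X) - pi(Z) for Z in M, so A + ker(pi) = {rho <= 0} and,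
   rho being continuous, its interior is {rho < 0}. Hence the common boundary points of A and
   A + ker(pi) are the X in A with rho(X) = 0, i.e. those for which 0 is an optimal payoff.
   If optimal payoffs are unique and Z lies in ker(pi) and in the kernels of the constraints
   active at such an X, then tZ is optimal for small t > 0, so Z = 0. Conversely, if Z and W
   are optimal for X, the point Y = X + (Z + W)/2 is in A with rho(Y) = 0, and Z - W lies in
   ker(pi) and in every kernel active at Y, since X + Z and X + W lie in A while their
   average attains the active bounds; so Z = W. *)

From HB Require Import structures.
From mathcomp Require Import all_boot all_order all_algebra.
From mathcomp Require Import all_classical all_reals all_analysis.
From mathcomp Require Import ring lra.

Import Order.TTheory GRing.Theory Num.Theory numFieldTopology.Exports numFieldNormedType.Exports.
Local Open Scope classical_set_scope.
Local Open Scope ring_scope.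

Section AffineProgram.
Context {R : realFieldType} {V : lmodType R}.
Implicit Types (C S : set V) (f : V -> R).

Definition affine_closed C :=
  forall x y (t : R), C x -> C y -> C (t *: x + (1 - t) *: y).

Definition affine_on C f := forall x y (t : R), C x -> C y ->
  f (t *: x + (1 - t) *: y) = t * f x + (1 - t) * f y.

Definition attains_min f S := exists2 w, S w & forall v, S v -> f w <= f v.

Lemma affine_onS C C' f : C' `<=` C -> affine_on C f -> affine_on C' f.
Proof. by move=> C'C f_aff x y t /C'C Cx /C'C Cy; apply: f_aff. Qed.

Lemma affine_on_ge C f c x y (t : R) : affine_on C f -> C x -> C y ->
  0 <= t <= 1 -> c <= f x -> c <= f y -> c <= f (t *: x + (1 - t) *: y).
Proof.
move=> f_aff Cx Cy /andP[t_ge0 t_le1] cfx cfy; rewrite f_aff //.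
have -> : c = t * c + (1 - t) * c by ring.
by apply: lerD; apply: ler_wpM2l; rewrite ?subr_ge0.
Qed.

Lemma affine_bounded_below_le {C f x y} : affine_closed C -> affine_on C f ->
  has_lbound (f @` C) -> C x -> C y -> f x <= f y.
Proof.
move=> C_aff f_aff [L L_lb] Cx Cy; rewrite leNgt; apply/negP => fyx.
pose t := (f x - L + 1) / (f x - f y).
have fxy_gt0 : 0 < f x - f y by rewrite subr_gt0.
have := L_lb _ (imageP f (C_aff _ _ t Cy Cx)); rewrite f_aff //.
have -> : t * f y + (1 - t) * f x = f x - t * (f x - f y) by ring.
by rewrite divfK ?gt_eqF //; lra.
Qed.

Context {I : eqType}.
Variables (g : I -> V -> R) (a : I -> R) (p : V -> R).

Definition polyhedron C (s : seq I) : set V :=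
  [set v | C v /\ forall i, i \in s -> a i <= g i v].

Definition face C i : set V := [set v | C v /\ g i v = a i].

Lemma polyhedron_nil C : polyhedron C [::] = C.
Proof. by apply/seteqP; split=> [v []|v Cv] //; split. Qed.

Lemma polyhedron_cons C i s v :
  polyhedron C (i :: s) v <-> a i <= g i v /\ polyhedron C s v.
Proof.
split=> [[Cv le_ag]|[le_ai [Cv le_ag]]].
  split; first by apply: le_ag; rewrite mem_head.
  by split=> // j js; apply: le_ag; rewrite in_cons js orbT.
by split=> // j; rewrite in_cons => /orP[/eqP->|/le_ag].
Qed.

Lemma polyhedron_sub {C i s} : polyhedron C (i :: s) `<=` polyhedron C s.
Proof. by move=> v /polyhedron_cons[]. Qed.

Lemma face_polyhedron_sub {C i s} :
  polyhedron (face C i) s `<=` polyhedron C (i :: s).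
Proof. by move=> v [[Cv gv] le_ag]; apply/polyhedron_cons; rewrite gv. Qed.

Section Step.
Context {C : set V} {i : I} {s : seq I}.
Hypotheses (C_aff : affine_closed C) (p_aff : affine_on C p)
  (g_aff : forall j, affine_on C (g j)).

Lemma polyhedron_convex {x y} {t : R} : 0 <= t <= 1 ->
  polyhedron C s x -> polyhedron C s y -> polyhedron C s (t *: x + (1 - t) *: y).
Proof.
move=> t01 [Cx le_ax] [Cy le_ay]; split; first exact: C_aff.
by move=> j js; apply: affine_on_ge => //; [apply: le_ax|apply: le_ay].
Qed.

(* The segment from a feasible [x] to [v] crosses the face of constraint [i],
   and [p] does not increase along it. *)
Lemma push_to_face {v} : polyhedron C s v -> g i v < a i ->
  (forall x, polyhedron C (i :: s) x -> p v <= p x) ->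
  forall {x}, polyhedron C (i :: s) x ->
  exists2 u, polyhedron (face C i) s u & p u <= p x.
Proof.
move=> sv gv_lt v_min x sx; have /polyhedron_cons[gx_ge sx'] := sx.
pose l := (g i x - a i) / (g i x - g i v).
have gxv_gt0 : 0 < g i x - g i v by rewrite subr_gt0; apply: lt_le_trans gx_ge.
have l01 : 0 <= l <= 1.
  by apply/andP; split; [apply: divr_ge0; lra|rewrite ler_pdivrMr // mul1r; lra].
have [Cv _] := sv; have [Cx _] := sx.
exists (l *: v + (1 - l) *: x).
  have [Cu su] := polyhedron_convex l01 sv sx'.
  split=> //; split=> //; rewrite g_aff //.
  have -> : l * g i v + (1 - l) * g i x = g i x - l * (g i x - g i v) by ring.
  by rewrite /l divfK ?gt_eqF //; ring.
rewrite p_aff //; have := v_min x sx; move: l01 => /andP[l0 l1].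
have -> : l * p v + (1 - l) * p x = p x - l * (p x - p v) by ring.
move=> pvx; have : 0 <= l * (p x - p v) by apply: mulr_ge0; lra.
lra.
Qed.

Lemma face_affine_closed : affine_closed (face C i).
Proof.
move=> x y t [Cx gx] [Cy gy]; split; first exact: C_aff.
by rewrite g_aff // gx gy; ring.
Qed.

Lemma minimizer_or_lower_point :
  (polyhedron C s !=set0 -> has_lbound (p @` polyhedron C s) ->
    attains_min p (polyhedron C s)) ->
  polyhedron C (i :: s) !=set0 -> has_lbound (p @` polyhedron C (i :: s)) ->
  attains_min p (polyhedron C (i :: s)) \/
  exists v, [/\ polyhedron C s v, g i v < a i &
                forall x, polyhedron C (i :: s) x -> p v <= p x].
Proof.
move=> IHs [x0 sx0] [L L_lb].
have L_le x : polyhedron C (i :: s) x -> L <= p x by move=> sx; apply: L_lb; exists x.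
have [bounded|unbounded] := pselect (has_lbound (p @` polyhedron C s)).
  have [w sw w_min] := IHs (ex_intro _ x0 (polyhedron_sub _ sx0)) bounded.
  have [agw|gwa] := leP (a i) (g i w).
    left; exists w; first exact/polyhedron_cons.
    by move=> x /polyhedron_sub; apply: w_min.
  by right; exists w; split=> // x /polyhedron_sub; apply: w_min.
right; have [v sv pvL] : exists2 v, polyhedron C s v & p v < L.
  apply: contrapT => no_v; apply: unbounded; exists L => _ [v sv <-].
  by rewrite leNgt; apply/negP => pvL; apply: no_v; exists v.
exists v; split=> // [|x sx]; last exact: ltW (lt_le_trans pvL (L_le x sx)).
rewrite ltNge; apply/negP => agv.
by have := L_le v (proj2 (polyhedron_cons C i s v) (conj agv sv)); rewrite leNgt pvL.
Qed.
End Step.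


Lemma affine_program_attains_min s C : affine_closed C -> affine_on C p ->
  (forall j, affine_on C (g j)) -> polyhedron C s !=set0 ->
  has_lbound (p @` polyhedron C s) -> attains_min p (polyhedron C s).
Proof.
elim: s C => [|i s IH] C C_aff p_aff g_aff ne lb.
  rewrite polyhedron_nil in ne lb *; have [w Cw] := ne.
  by exists w => // v Cv; exact: affine_bounded_below_le C_aff p_aff lb Cw Cv.
have [//|[v [sv gv v_min]]] := minimizer_or_lower_point (IH C C_aff p_aff g_aff) ne lb.
have face_sub : face C i `<=` C by move=> x [].
have [w sw w_min] : attains_min p (polyhedron (face C i) s).
  apply: IH; first exact: face_affine_closed.
  - exact: affine_onS face_sub p_aff.
  - by move=> j; apply: affine_onS face_sub (g_aff j).
  - have [x sx] := ne; have [u su _] := push_to_face C_aff p_aff g_aff sv gv v_min sx.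
    by exists u.
  - have [L L_lb] := lb; exists L => _ [u su <-].
    by apply: L_lb; exists u => //; apply: face_polyhedron_sub.
exists w; first exact: face_polyhedron_sub.
move=> x sx; have [u su pux] := push_to_face C_aff p_aff g_aff sv gv v_min sx.
exact: le_trans (w_min _ su) pux.
Qed.
End AffineProgram.

Lemma near0_line {R : numFieldType} {E : tvsType R} (Y U : E) {P : set E} :
  nbhs Y P -> \forall t \near (0 : R), P (Y + t *: U).
Proof.
have tU0 : (fun t : R => t *: U) @ (0 : R) --> (0 : E).
  rewrite -(scale0r U).
  exact: (cvg_comp2 cvg_id (cvg_cst U) (scale_continuous ((0 : R^o), U))).
have := cvg_comp2 (cvg_cst Y) tU0 (add_continuous (Y, 0)).
by rewrite addr0; apply.
Qed.

Section FiniteSpan.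
Context {R : realType} {E : tvsType R} {d : nat} (b : 'I_d -> E).

Lemma fspanD x y : fspan b x -> fspan b y -> fspan b (x + y).
Proof.
move=> [c _ <-] [c' _ <-]; exists (fun i => c i + c' i) => //.
by rewrite -big_split /=; apply: eq_bigr => i _; rewrite scalerDl.
Qed.

Lemma fspanZ (k : R) x : fspan b x -> fspan b (k *: x).
Proof.
move=> [c _ <-]; exists (fun i => k * c i) => //.
by rewrite scaler_sumr; apply: eq_bigr => i _; rewrite scalerA.
Qed.

End FiniteSpan.

Section OptimalPayoff.
Variables (R : realType) (E : tvsType R) (M : set E) (pi : E -> R) (A : set E).
Variables (U : E) (m : nat) (phi : 'I_m -> E -> R) (alpha : 'I_m -> R).
Hypotheses (MD : forall x y, M x -> M y -> M (x + y))
  (MZ : forall (c : R) x, M x -> M (c *: x)).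
Hypotheses (pi_lin : linear_on M pi) (MU : M U) (piU : pi U = 1).
Hypothesis A_up : forall X (c : R), A X -> 0 <= c -> A (X + c *: U).
Hypothesis phi_lin : forall i, cont_lin_functional (phi i).
Hypothesis A_poly : A = \bigcap_(i in [set: 'I_m]) [set X | alpha i <= phi i X].
Hypothesis A0 : A 0.
Hypothesis rho_fin : rho_finite M pi A.
Hypotheses (A_closed : closed A) (rho_cont : continuous (rho M pi A)).

Local Notation rhoA := (rho M pi A).
Local Notation K := (kerpi M pi).
Local Notation active_kernel Y :=
  (K `&` \bigcap_(i in active_set A phi Y) [set Z | phi i Z = 0]).

Let M0 : M 0. Proof. by rewrite -(scale0r U); apply: MZ. Qed.
Let MN {x} : M x -> M (- x). Proof. by rewrite -scaleN1r; apply: MZ. Qed.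
Let MB {x y} : M x -> M y -> M (x - y). Proof. by move=> Mx /MN; apply: MD. Qed.
Let piD x y : M x -> M y -> pi (x + y) = pi x + pi y. Proof. exact: pi_lin.1. Qed.
Let piZ (c : R) x : M x -> pi (c *: x) = c * pi x. Proof. exact: pi_lin.2. Qed.
Let pi0 : pi 0 = 0. Proof. by have := piZ 0 _ M0; rewrite scale0r mul0r. Qed.
Let piN x : M x -> pi (- x) = - pi x.
Proof. by move=> Mx; rewrite -[- x]scaleN1r piZ // mulN1r. Qed.
Let piB x y : M x -> M y -> pi (x - y) = pi x - pi y.
Proof. by move=> Mx My; rewrite piD ?piN //; apply: MN. Qed.
Let phiD i x y : phi i (x + y) = phi i x + phi i y. Proof. by have [] := phi_lin i. Qed.
Let phiZ i (c : R) x : phi i (c *: x) = c * phi i x. Proof. by have [] := phi_lin i. Qed.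
Let phi0 i : phi i 0 = 0. Proof. by have := phiZ i 0 0; rewrite scale0r mul0r. Qed.
Let phiB i x y : phi i (x - y) = phi i x - phi i y.
Proof. by rewrite phiD -[- y]scaleN1r phiZ mulN1r. Qed.

Lemma inA X : A X <-> forall i, alpha i <= phi i X.
Proof. by rewrite A_poly; split=> [AX i|AX i _]; apply: AX. Qed.

Lemma rho_le X Z : M Z -> A (X + Z) -> rhoA X <= pi Z.
Proof. by move=> MZ' AXZ; apply: ge_inf; [exact: (rho_fin X).2|exists Z]. Qed.

Lemma admissible_polyhedron X :
  polyhedron (fun i Z => phi i (X + Z)) alpha M (enum 'I_m) = [set Z | M Z /\ A (X + Z)].
Proof.
apply/seteqP; split=> Z [MZ' AXZ]; split=> //.
  by apply/inA => i; apply: AXZ; rewrite mem_enum.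
by move=> i _; move/inA: AXZ.
Qed.

Lemma optR_nonempty X : optR M pi A X !=set0.
Proof.
have M_aff : affine_closed M by move=> x y t Mx My; apply: MD; apply: MZ.
have [w [Mw AXw] w_min] : attains_min pi [set Z | M Z /\ A (X + Z)].
  rewrite -admissible_polyhedron; apply: affine_program_attains_min => //.
  - by move=> x y t Mx My; rewrite piD ?piZ //; apply: MZ.
  - move=> i x y t Mx My /=; rewrite !phiD !phiZ.
    have -> : phi i X = t * phi i X + (1 - t) * phi i X by ring.
    ring.
  - by rewrite admissible_polyhedron; have [_ [Z ? _]] := (rho_fin X).1; exists Z.
  - by rewrite admissible_polyhedron; exact: (rho_fin X).2.
exists w; split=> //; split=> //; apply/le_anti/andP; split; last exact: rho_le.
by apply: lb_le_inf; [exact: (rho_fin X).1|move=> _ [Z ? <-]; apply: w_min].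
Qed.

Lemma rhoD X Z : M Z -> rhoA (X + Z) = rhoA X - pi Z.
Proof.
move=> MZ'; apply/le_anti/andP; split.
  have [W [MW [AXW <-]]] := optR_nonempty X.
  have := rho_le (X + Z) _ (MB MW MZ'); rewrite piB //; apply.
  by rewrite -addrA (addrCA Z) subrr addr0.
have [W [MW [AXZW piW]]] := optR_nonempty (X + Z).
have := rho_le X _ (MD _ _ MZ' MW); rewrite addrA piD // piW => /(_ AXZW).
by rewrite lerBlDr addrC.
Qed.

Lemma sum_kerE : mink_sum A K = [set Y | rhoA Y <= 0].
Proof.
apply/seteqP; split=> [_ [a Aa [k [Mk pik] <-]]|Y rY] /=.
  by rewrite rhoD // pik subr0; have := rho_le a _ M0; rewrite addr0 pi0; apply.
have [Z [MZ' [AYZ piZ']]] := optR_nonempty Y.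
have MrU : M (- rhoA Y *: U) by apply: MZ.
have MZU : M (Z + - rhoA Y *: U) by apply: MD.
exists (Y + (Z + - rhoA Y *: U)); first by rewrite addrA; apply: A_up; rewrite ?oppr_ge0.
exists (- (Z + - rhoA Y *: U)); last by rewrite addrK.
by split; [apply: MN|rewrite piN // piD // piZ // piZ' piU mulr1 subrr oppr0].
Qed.

Lemma interior_sum_kerE : interior (mink_sum A K) = [set Y | rhoA Y < 0].
Proof.
apply/seteqP; split=> Y; rewrite sum_kerE.
  move=> /(near0_line Y U) near_le0.
  have near_left : \forall t \near (0 : R)^'-, rhoA (Y + t *: U) <= 0 /\ t < 0.
    by apply: filterI (nbhs_left_lt 0); apply: filterS near_le0 => t + _.
  have [t [+ t_lt0]] := filter_ex near_left.
  by rewrite rhoD ?piZ // ?piU /=; [lra|apply: MZ].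
move=> /lt_nbhsl/rho_cont near_lt0.
by near=> Z; apply/ltW; near: Z.
Unshelve. all: by end_near.
Qed.

Lemma common_boundaryP Y :
  topo_boundary A Y /\ topo_boundary (mink_sum A K) Y <-> A Y /\ rhoA Y = 0.
Proof.
have A_sub : A `<=` [set X | rhoA X <= 0].
  by rewrite -sum_kerE => X AX; exists X => //; exists 0; [split|rewrite addr0].
have intA_sub : interior A `<=` [set X | rhoA X < 0].
  rewrite -interior_sum_kerE // => X; apply: filterS; rewrite sum_kerE; exact: A_sub.
rewrite /topo_boundary interior_sum_kerE // sum_kerE.
split=> [[[clY _] [_ /negP]]|[AY rY]].
  have AY : A Y by move/closure_id: A_closed => ->.
  by rewrite -leNgt => rY; split=> //; apply/le_anti; rewrite rY A_sub.
split; split.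
- exact: subset_closure.
- by move=> /intA_sub; rewrite /= rY ltxx.
- by apply: subset_closure; rewrite /= rY.
- by rewrite /= rY ltxx.
Qed.

Lemma sigmaA_le i X : A X -> sigmaA A (phi i) <= phi i X.
Proof.
move=> AX; apply: ge_inf; last by exists X.
by exists (alpha i) => _ [Y /inA AY <-].
Qed.

Lemma alpha_le_sigmaA i : alpha i <= sigmaA A (phi i).
Proof. by apply: lb_le_inf; [exists (phi i 0), 0|move=> _ [Y /inA AY <-]]. Qed.

Lemma inactive_gt X i : A X -> ~ active_set A phi X i -> alpha i < phi i X.
Proof.
move=> AX inactive; apply: le_lt_trans (alpha_le_sigmaA i) _.
by rewrite lt_neqAle sigmaA_le // andbT; apply/eqP => sigmaE; apply: inactive.
Qed.

(* The inactive constraints hold strictly at X, so they survive a short step. *)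
Lemma feasible_direction {X Z} : A X ->
  (forall i, active_set A phi X i -> phi i Z = 0) ->
  \forall t \near (0 : R)^'+, A (X + t *: Z).
Proof.
move=> AX active0.
suff : \forall t \near (0 : R)^'+, forall i, alpha i <= phi i X + t * phi i Z.
  by apply: filterS => t near_t; apply/inA => i; rewrite phiD phiZ.
apply: filter_forall => i; have [Zi_ge0|Zi_lt0] := leP 0 (phi i Z).
  apply: filterS (nbhs_right_gt 0) => t t_gt0; have := (inA X).1 AX i.
  have : 0 <= t * phi i Z by rewrite mulr_ge0 // ltW.
  lra.
have Xi_gt : alpha i < phi i X.
  by apply: inactive_gt => // /active0 Zi0; move: Zi_lt0; rewrite Zi0 ltxx.
have : 0 < (phi i X - alpha i) / - phi i Z by apply: divr_gt0; lra.
move=> /nbhs_right_lt; apply: filterS => t.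
by rewrite ltr_pdivlMr; lra.
Qed.

Lemma active_kernel_eq0 : (forall X, exists Z0, optR M pi A X = [set Z0]) ->
  forall X, topo_boundary A X -> topo_boundary (mink_sum A K) X ->
  active_kernel X = [set 0].
Proof.
move=> optR1 X bAX bAKX; have [AX rX] := (common_boundaryP X).1 (conj bAX bAKX).
have [Z0 optRE] := optR1 X.
have opt_eq0 Z : M Z -> A (X + Z) -> pi Z = 0 -> Z = 0.
  have opt0 : optR M pi A X 0 by split=> //; rewrite addr0 pi0 rX.
  move=> MZ' AXZ piZ0; have : optR M pi A X Z by split=> //; rewrite piZ0 rX.
  by rewrite optRE => ->; move: opt0; rewrite optRE.
apply/seteqP; split=> [Z [[MZ' piZ0] active0]|_ ->]; last first.
  by split=> [|i _] /=; [split|rewrite phi0].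
have [t [t_gt0 AXtZ]] :=
  filter_ex (filterI (nbhs_right_gt 0) (feasible_direction AX active0)).
have /eqP := opt_eq0 _ (MZ t _ MZ') AXtZ ltac:(by rewrite piZ // piZ0 mulr0).
by rewrite scaler_eq0 gt_eqF //= => /eqP.
Qed.

Lemma optR_midpoint {X Z W} : optR M pi A X Z -> optR M pi A X W ->
  A (X + 2^-1 *: (Z + W)) /\ rhoA (X + 2^-1 *: (Z + W)) = 0.
Proof.
move=> [MZ' [AXZ piZ']] [MW [AXW piW]]; split.
  apply/inA => i; have := (inA _).1 AXZ i; have := (inA _).1 AXW i.
  by rewrite !phiD phiZ phiD; lra.
have MZW : M (Z + W) by apply: MD.
by rewrite rhoD ?piZ ?piD ?piZ' ?piW //; [lra|apply: MZ].
Qed.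

Lemma optR_midpoint_kernel {X Z W} : optR M pi A X Z -> optR M pi A X W ->
  active_kernel (X + 2^-1 *: (Z + W)) (Z - W).
Proof.
move=> [MZ' [AXZ piZ']] [MW [AXW piW]].
split; first by split; [apply: MB|rewrite piB // piZ' piW subrr].
move=> i /= activeY; have := sigmaA_le i _ AXZ; have := sigmaA_le i _ AXW.
move: activeY; rewrite /active_set /= phiB !phiD phiZ phiD; lra.
Qed.

Lemma optR_unique : (forall X, topo_boundary A X -> topo_boundary (mink_sum A K) X ->
    active_kernel X = [set 0]) ->
  forall X, exists Z0, optR M pi A X = [set Z0].
Proof.
move=> kernel0 X; have [W optW] := optR_nonempty X.
exists W; apply/seteqP; split=> [Z optZ|_ -> //] /=.
have [bA bAK] := (common_boundaryP _).2 (optR_midpoint optZ optW).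
have := optR_midpoint_kernel optZ optW; rewrite kernel0 // => /eqP.
by rewrite subr_eq0 => /eqP.
Qed.

End OptimalPayoff.

Theorem mainTheorem12 (R : realType) (E : tvsType R)
  (le : E -> E -> Prop) (M : set E) (pi : E -> R) (A : set E)
  (m : nat) (phi : 'I_m -> E -> R) :
  hausdorff_space E ->
  first_countable (E := E) ->
  vector_partial_order le ->
  (exists d : nat, (1 < d)%N /\ finite_dim_subspace_of_dim M d) ->
  linear_on M pi ->
  (* (A1) *)
  (exists U, M U /\ pos_cone le U /\ pi U = 1) ->
  (* (A2) *)
  A <> setT -> closed A -> A 0 ->
  (forall X P, A X -> pos_cone le P -> A (X + P)) ->
  (* (A3) *)
  rho_finite M pi A -> continuous (rho M pi A) ->
  (* polyhedral, represented by positive continuous functionals *)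
  (forall i, pos_dual le (phi i)) ->
  polyhedral_rep A phi ->
  ((forall X : E, exists Z0, optR M pi A X = [set Z0]) <->
   (forall X : E, topo_boundary A X -> topo_boundary (mink_sum A (kerpi M pi)) X ->
      kerpi M pi `&` \bigcap_(i in active_set A phi X) [set Z | phi i Z = 0]
      = [set 0])).
Proof.
move=> _ _ [_ _ _ _ le_scale] [d [_ [b [_ ->]]]] pi_lin [U [MU [posU piU]]]
  _ A_closed A0 A_mono rho_fin rho_cont phi_pos [alpha A_poly].
have A_up X (c : R) : A X -> 0 <= c -> A (X + c *: U).
  move=> AX c_ge0; apply: A_mono => //.
  by rewrite /pos_cone -(scaler0 _ c); apply: le_scale.
have phi_lin i : cont_lin_functional (phi i) by have [] := phi_pos i.
have MD := @fspanD R E d b; have MZ := @fspanZ R E d b.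
split; [apply: (@active_kernel_eq0 _ _ _ _ _ U _ _ alpha)|
        apply: (@optR_unique _ _ _ _ _ U _ _ alpha)] => //.
Qed.
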